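(* Let $D$ be a knot diagram and $B$ an over-bridge or under-bridge of $D$, and let $D^\circ_B$ be the knotoid diagram obtained by removing the interior of $B$ from $D$. Then $g(D)\ge g(D^\circ_B)$.
   Context: A knot diagram is a generic immersion of an oriented circle in $\mathbb{R}^2$ whose only singularities are finitely many transverse double points (crossings), each with over/under information. The genus $g(D)$ of a knot diagram is the genus of the canonical Seifert surface from Seifert's algorithm: smooth each crossing in the orientation-respecting way to get disjoint embedded circles (Seifert circles), fill them with disjoint disks, and attach a half-twisted band at each crossing; equivalently $g(D)=(n-s_D+1)/2$ with $n$ the number of crossings and $s_D$ the number of Seifert circles. An over-bridge (resp. under-bridge) of length $k\ge1$ of $D$ is a sub-arc $B$ of $D$, with endpoints not at crossings, whose interior passes through exactly $k$ crossings, passing over (resp. under) at each. A knotoid diagram is a generic immersion $f:[0,1]\to\mathbb{R}^2$ with only transverse double points, each with over/under data. Its canonical surface: draw it in $\mathbb{R}^2\times\{0\}\subset\mathbb{R}^3$, orient it, smooth every crossing in the orientation-respecting way, obtaining disjoint embedded Seifert circles and one embedded interval $J$ (the Seifert interval) with the same endpoints as the diagram; fill the Seifert circles with disjoint disks lying above $\mathbb{R}^2\times\{0\}$, take a band $J\times[0,1]$ lying below $\mathbb{R}^2\times\{0\}$ meeting it in $J\times\{0\}$, and attach a half-twisted band at each crossing. The genus of a knotoid diagram is the genus of this surface (which has one boundary component). *)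

From HB Require Import structures.
From mathcomp Require Import all_boot all_order all_algebra.
Set Implicit Arguments. Unset Strict Implicit. Unset Printing Implicit Defensive.
Import Order.TTheory GRing.Theory Num.Theory.

(* A passage of the curve through a crossing: ((label, over?), sign).
   [gover] = true iff the curve passes OVER at this passage;
   [gsign] = true iff the crossing is positive (same on both passages). *)
Definition gentry := (nat * bool * bool)%type.
Definition glabel (x : gentry) : nat := x.1.1.
Definition gover (x : gentry) : bool := x.1.2.
Definition gsign (x : gentry) : bool := x.2.
Definition gdef : gentry := (0, false, false).

(* Signed Gauss code: the passages through crossings in order along the
   oriented curve (cyclically for a knot diagram, linearly from the tail to
   the head for a knotoid diagram). *)
Definition gauss_code := seq gentry.

Definition wf_gauss (w : gauss_code) : bool :=
  all (fun x =>
    [&& count (fun y => (glabel y == glabel x) && gover y) w == 1,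
        count (fun y => (glabel y == glabel x) && ~~ gover y) w == 1 &
        all (fun y => (glabel y == glabel x) ==> (gsign y == gsign x)) w]) w.

Definition ncross (w : gauss_code) : nat := size (undup (map glabel w)).

Definition gpartner (w : gauss_code) (i : nat) : nat :=
  find (fun j => (j != i) && (glabel (nth gdef w j) == glabel (nth gdef w i)))
       (iota 0 (size w)).

Definition ncycles (m : nat) (f : nat -> nat) : nat :=
  fcard (fun i : 'I_m => insubd i (f i)) 'I_m.

(* Planarity of a signed Gauss code of a closed curve: the 4-valent graph
   (vertices = crossings, edges = arcs) with the rotation system determined
   by the crossing signs has  #faces = #vertices + 2  (Euler's formula on
   the sphere).  Half-edge (p, b) is encoded as 2p + b; b = true: outgoing
   half-edge at passage p, b = false: incoming one.  At passage p with
   partner q, the counterclockwise rotation is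
     in_p, in_q, out_p, out_q   if q crosses p from right to left,
     in_p, out_q, out_p, in_q   otherwise,
   and q crosses p from right to left iff (sign == over at p). *)
Definition face_step (w : gauss_code) (h : nat) : nat :=
  let m := size w in
  let p := h./2 in
  let b := odd h in
  let p1 := if b then p.+1 %% m else (p + m).-1 %% m in
  let b1 := ~~ b in
  let q := gpartner w p1 in
  let rl := gsign (nth gdef w p1) == gover (nth gdef w p1) in
  q.*2 + (if rl then b1 else ~~ b1).

Definition planar_gauss (w : gauss_code) : bool :=
  (size w == 0) || (ncycles (size w).*2 (face_step w) == ncross w + 2).

Definition knot_diagram (w : gauss_code) : bool := wf_gauss w && planar_gauss w.

(* Seifert circles of a knot diagram: arc i runs from passage i to passage
   i+1 (mod m); the oriented smoothing at passage i+1 continues along the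
   outgoing arc of the partner passage. *)
Definition seifert_circles_knot (w : gauss_code) : nat :=
  let m := size w in
  if m == 0 then 1 else ncycles m (fun i => gpartner w (i.+1 %% m)).

Definition knot_genus (w : gauss_code) : rat :=
  ((ncross w)%:R - (seifert_circles_knot w)%:R + 1) / 2%:R.

(* Seifert circles of a knotoid diagram: arcs 0..m, arc j runs from passage
   j-1 (tail if j = 0) to passage j (head if j = m).  The oriented smoothing
   sends arc j (j < m) to arc (partner j)+1; we close the Seifert interval
   (arc m -> arc 0) so it becomes one extra cycle, which is subtracted. *)
Definition seifert_circles_knotoid (v : gauss_code) : nat :=
  let m := size v in
  ncycles m.+1 (fun j => if j < m then (gpartner v j).+1 else 0) - 1.

(* Canonical surface: s disks + one band + n half-twisted bands, so
   chi = s + 1 - n, one boundary component, genus = (1 - chi - 1)/2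
   = (n - s)/2. *)
Definition knotoid_genus (v : gauss_code) : rat :=
  ((ncross v)%:R - (seifert_circles_knotoid v)%:R) / 2%:R.

(* A sub-arc whose interior passes, in order, through the passages
   b, b+1, ..., b+k-1 (mod size w), with k >= 1. *)
Definition bridge_pos (w : gauss_code) (b j : nat) : nat := (b + j) %% size w.

Definition is_over_bridge (w : gauss_code) (b k : nat) : bool :=
  [&& 0 < k, b < size w &
      all (fun j => gover (nth gdef w (bridge_pos w b j))) (iota 0 k)].

Definition is_under_bridge (w : gauss_code) (b k : nat) : bool :=
  [&& 0 < k, b < size w &
      all (fun j => ~~ gover (nth gdef w (bridge_pos w b j))) (iota 0 k)].

Definition bridge_labels (w : gauss_code) (b k : nat) : seq nat :=
  [seq glabel (nth gdef w (bridge_pos w b j)) | j <- iota 0 k].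

(* D°_B: the knotoid diagram running from the end of B around to the start
   of B; the crossings met by B disappear. *)
Definition remove_bridge (w : gauss_code) (b k : nat) : gauss_code :=
  [seq x <- [seq nth gdef w (bridge_pos w (b + k) j) | j <- iota 0 (size w - k)]
     | glabel x \notin bridge_labels w b k].

(* Both genera are (n - s + 1)/2, with s the number of cycles of the
   oriented smoothing (for the knotoid, the Seifert interval is closed up into
   one extra cycle).  Cutting D open just after B, keeping every crossing,
   gives a knotoid diagram whose smoothing has at least s_D cycles.  The
   crossings of B are then deleted one at a time: deleting a crossing amounts
   to composing the smoothing with the transposition of its two passages, so
   n drops by one while the number of cycles drops by at most one.  That B is
   a bridge is only needed to know that it does not run around the whole
   diagram. *)

From mathcomp Require Import all_boot all_order all_algebra all_fingroup.
From mathcomp Require Import zify lra.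
Set Implicit Arguments. Unset Strict Implicit. Unset Printing Implicit Defensive.

Section OrbitSimulation.
Variables (T T' : finType) (f : T -> T) (g : T' -> T') (h : T' -> T).
Hypothesis h_sim : forall x, fconnect f (h x) (h (g x)).

Lemma fconnect_sim x y : fconnect g x y -> fconnect f (h x) (h y).
Proof.
move=> /connectP [p pth ->]; elim: p x pth => [|z p IH] x /=; first by rewrite connect0.
by case/andP=> /eqP <- pth; apply: connect_trans (h_sim x) (IH _ pth).
Qed.

Lemma leq_fcard_sim : injective f -> injective g ->
  (forall y, exists x, fconnect f y (h x)) -> fcard f T <= fcard g T'.
Proof.
move=> injf injg h_onto; have symf := fconnect_sym injf.
pose F x := froot f (h x).
apply: (@leq_trans #|F @: [set x | froots g x]|); last first.
  apply: leq_trans (leq_imset_card _ _) _.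
  by apply/subset_leq_card/subsetP=> x; rewrite !inE => ->.
apply/subset_leq_card/subsetP=> r; rewrite !inE => /andP[/eqP rootr _].
have [x rx] := h_onto r.
apply/imsetP; exists (froot g x); rewrite ?inE ?roots_root /F //; first exact: fconnect_sym.
have /(fingraph.rootP symf) <- : fconnect f (h x) (h (froot g x)).
  exact/fconnect_sim/connect_root.
by rewrite -rootr; apply/(fingraph.rootP symf).
Qed.

End OrbitSimulation.

Lemma fconnect_porbit (T : finType) (s : {perm T}) x y :
  fconnect s x y = (y \in porbit s x).
Proof.
apply/idP/porbitP=> [c|[i ->]]; last by rewrite permX fconnect_iter.
by exists (findex s x y); rewrite permX iter_findex.
Qed.

Lemma fcard_porbits (T : finType) (s : {perm T}) : fcard s T = #|porbits s|.
Proof.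
have symf := fconnect_sym (@perm_inj _ s).
have porbit_root x : porbit s (froot s x) = porbit s x.
  by apply/eqP; rewrite eq_porbit_mem -fconnect_porbit connect_root.
have -> : porbits s = porbit s @: [set x | froots s x].
  apply/setP=> O; apply/imsetP/imsetP=> [[x _ ->]|[x _ ->]]; last by exists x.
  by exists (froot s x); rewrite ?inE ?roots_root ?porbit_root.
rewrite card_in_imset; first by apply: eq_card=> x; rewrite !inE andbT.
move=> x y; rewrite !inE => /eqP rx /eqP ry /eqP.
rewrite eq_porbit_mem -fconnect_porbit => /(fingraph.rootP symf).
by rewrite rx ry.
Qed.

(* Composing with a transposition merges or splits one cycle. *)
Lemma fcard_comp_tperm (T : finType) (f : T -> T) x y : injective f ->
  fcard f T <= fcard (f \o tperm x y) T + 1.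
Proof.
move=> injf; pose s := perm injf.
rewrite (eq_fcard (f := f) (f' := s)); last by move=> z; rewrite permE.
rewrite (eq_fcard (f := f \o tperm x y) (f' := (tperm x y * s)%g)); last first.
  by move=> z; rewrite permM permE.
rewrite !fcard_porbits.
have [<-|nxy] := eqVneq x y; first by rewrite tperm1 mul1g leq_addr.
by have /= := porbits_mul_tperm s x y; rewrite nxy; case: (x \notin _) => /=; lia.
Qed.

Lemma count_eq1_nth_inj (T : Type) (P : pred T) (s : seq T) x0 i j :
  count P s = 1 -> i < size s -> j < size s ->
  P (nth x0 s i) -> P (nth x0 s j) -> i = j.
Proof.
have count_gt0 (s' : seq T) k : k < size s' -> P (nth x0 s' k) -> 0 < count P s'.
  by move=> hk Pk; rewrite -has_count; apply/(has_nthP x0); exists k.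
elim: s i j => [|y s IH] [|i] [|j] //= c hi hj Pi Pj.
- by move: c; rewrite Pi /=; have := count_gt0 _ _ hj Pj; lia.
- by move: c; rewrite Pj /=; have := count_gt0 _ _ hi Pi; lia.
- congr S; apply: IH => //; move: c; case: (P y) => //= c.
  by have := count_gt0 _ _ hi Pi; lia.
Qed.

Notation lab v i := (glabel (nth gdef v i)).
Notation ovr v i := (gover (nth gdef v i)).

Lemma wf_gauss_filter (v : gauss_code) (P : pred nat) :
  wf_gauss v -> wf_gauss [seq x <- v | P (glabel x)].
Proof.
move=> wf; apply/allP => x; rewrite mem_filter => /andP[Px xv].
have /and3P[c_over c_under c_sign] := allP wf x xv.
have same_count (o : pred gentry) :
  count (predI (fun y => (glabel y == glabel x) && o y) (P \o glabel)) v =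
  count (fun y => (glabel y == glabel x) && o y) v.
  by apply: eq_count => y /=; case: eqP => //= ->; rewrite Px andbT.
rewrite !count_filter (same_count gover) (same_count (negb \o gover)) c_over c_under.
by apply/allP => y; rewrite mem_filter => /andP[_ /(allP c_sign)].
Qed.

Section GaussCode.
Variable v : gauss_code.
Hypothesis wf : wf_gauss v.

Lemma wf_nth_inj i j : i < size v -> j < size v ->
  lab v i = lab v j -> ovr v i = ovr v j -> i = j.
Proof.
move=> hi hj eql eqo; have /and3P[/eqP c_over /eqP c_under _] := allP wf _ (mem_nth gdef hi).
case oi: (ovr v i) eqo => eqo.
  by apply: (count_eq1_nth_inj (x0 := gdef) c_over) => //=; rewrite -?eql -?eqo eqxx ?oi.
by apply: (count_eq1_nth_inj (x0 := gdef) c_under) => //=; rewrite -?eql -?eqo eqxx ?oi.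
Qed.

Lemma wf_partner_exists i : i < size v ->
  exists2 j, j < size v & (j != i) && (lab v j == lab v i).
Proof.
move=> hi; have /and3P[/eqP c_over /eqP c_under _] := allP wf _ (mem_nth gdef hi).
have [o c_o o_i] : exists2 o : pred gentry,
    count (fun y => (glabel y == lab v i) && o y) v = 1 & ~~ o (nth gdef v i).
  by case oi: (ovr v i); [exists (negb \o gover) | exists gover]; rewrite /= ?oi.
have : has (fun y => (glabel y == lab v i) && o y) v by rewrite has_count c_o.
case/(has_nthP gdef) => j hj /andP[lj oj]; exists j => //; rewrite lj andbT.
by apply: contraNneq o_i => <-.
Qed.

Lemma gpartner_eq i j : i < size v -> j < size v ->
  j != i -> lab v j = lab v i -> gpartner v i = j.
Proof.
move=> hi hj nji lji; rewrite /gpartner.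
set P := (fun j0 => _).
have hP : has P (iota 0 (size v)).
  by apply/(has_nthP 0); exists j; rewrite ?size_iota // nth_iota // /P add0n nji lji eqxx.
have := nth_find 0 hP; have := hP; rewrite has_find size_iota => fl.
rewrite nth_iota // add0n /P => /andP[nfi /eqP lfi].
set f := find _ _ in fl nfi lfi *.
have [eo|no] := eqVneq (ovr v f) (ovr v j); first by apply: wf_nth_inj; rewrite ?lfi.
have [ei|ni] := eqVneq (ovr v i) (ovr v f).
  by move: nfi; rewrite (wf_nth_inj hi fl) ?eqxx // lfi.
by move: nji; rewrite (@wf_nth_inj j i) ?eqxx //; move: no ni; do 3 case: (ovr v _).
Qed.

Lemma gpartnerP i : i < size v ->
  [/\ gpartner v i < size v, gpartner v i != i & lab v (gpartner v i) = lab v i].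
Proof.
move=> hi; have [j hj /andP[nji /eqP lji]] := wf_partner_exists hi.
by rewrite (gpartner_eq hi hj nji lji).
Qed.

Lemma gpartnerK i : i < size v -> gpartner v (gpartner v i) = i.
Proof.
by move=> hi; have [lt_j ne_j lab_j] := gpartnerP hi; apply: gpartner_eq; rewrite // eq_sym.
Qed.

Lemma same_label_cases p k : p < size v -> k < size v ->
  lab v k = lab v p -> k = p \/ k = gpartner v p.
Proof.
move=> hp hk e; have [->|nkp] := eqVneq k p; first by left.
by right; rewrite (gpartner_eq hp hk nkp e).
Qed.

End GaussCode.

Definition ordf m (F : nat -> nat) : 'I_m -> 'I_m := fun i => insubd i (F i).
Arguments ordf : clear implicits.

Lemma ncyclesE m F : ncycles m F = fcard (ordf m F) 'I_m.
Proof. by []. Qed.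

Section OrdFun.
Variables (m : nat) (F : nat -> nat).
Hypothesis F_lt : forall i, i < m -> F i < m.

Lemma ordf_val (i : 'I_m) : val (ordf m F i) = F i.
Proof. by rewrite /ordf val_insubd F_lt. Qed.

Lemma ordf_iter k (i : 'I_m) : val (iter k (ordf m F) i) = iter k F i.
Proof. by elim: k => //= k IH; rewrite ordf_val IH. Qed.

Lemma ordf_connect (a b : 'I_m) k : iter k F a = b -> fconnect (ordf m F) a b.
Proof.
move=> e; have -> : b = iter k (ordf m F) a by apply: val_inj; rewrite ordf_iter.
exact: fconnect_iter.
Qed.

Lemma ordf_inj : {in gtn m &, injective F} -> injective (ordf m F).
Proof.
move=> F_inj i j /(congr1 val); rewrite !ordf_val.
by move/(F_inj _ _ (ltn_ord i) (ltn_ord j))/val_inj.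
Qed.

End OrdFun.

Definition knotoid_smoothing (v : gauss_code) j :=
  if j < size v then (gpartner v j).+1 else 0.

Definition knotoid_cycles (v : gauss_code) := ncycles (size v).+1 (knotoid_smoothing v).

Section KnotoidSmoothing.
Variable v : gauss_code.
Hypothesis wf : wf_gauss v.

Lemma knotoid_smoothing_lt i : i < (size v).+1 -> knotoid_smoothing v i < (size v).+1.
Proof.
by rewrite /knotoid_smoothing; case: ifP => // hi _; have [] := gpartnerP wf hi.
Qed.

Lemma knotoid_smoothing_inj : {in gtn (size v).+1 &, injective (knotoid_smoothing v)}.
Proof.
move=> i j; rewrite /knotoid_smoothing !unfold_in /=.
case: ifP => hi; case: ifP => hj //; last by lia.
by move=> _ _ [] /(congr1 (gpartner v)); rewrite !gpartnerK.
Qed.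

Lemma knotoid_smoothing_ord_inj : injective (ordf (size v).+1 (knotoid_smoothing v)).
Proof. exact: ordf_inj knotoid_smoothing_lt knotoid_smoothing_inj. Qed.

Lemma knotoid_cycles_gt0 : 0 < knotoid_cycles v.
Proof.
have symf := fconnect_sym knotoid_smoothing_ord_inj.
rewrite /knotoid_cycles ncyclesE /n_comp_mem; apply/card_gt0P.
exists (froot (ordf (size v).+1 (knotoid_smoothing v)) ord0).
by rewrite inE /= roots_root.
Qed.

End KnotoidSmoothing.

Definition rem_at (i : nat) (s : gauss_code) : gauss_code := take i s ++ drop i.+1 s.

Lemma size_rem_at i s : i < size s -> size (rem_at i s) = (size s).-1.
Proof. by move=> h; rewrite /rem_at size_cat size_take h size_drop; lia. Qed.

Lemma nth_rem_at i s j : i < size s -> nth gdef (rem_at i s) j = nth gdef s (bump i j).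
Proof.
move=> h; rewrite /rem_at nth_cat size_take h /bump.
case: ltnP => hj; first by rewrite nth_take.
by rewrite nth_drop; congr nth; lia.
Qed.

Lemma filter_rem_at (a : pred gentry) i s : i < size s -> ~~ a (nth gdef s i) ->
  filter a (rem_at i s) = filter a s.
Proof.
move=> h na; rewrite -{2}(cat_take_drop i s) (drop_nth gdef h) /rem_at !filter_cat /=.
by rewrite (negbTE na).
Qed.

Section DeleteCrossing.
Variables (v : gauss_code) (p q : nat).
Hypotheses (wf : wf_gauss v) (lt_pq : p < q) (lt_q : q < size v) (pq : gpartner v p = q).
Local Notation m := (size v).
Let v' := [seq x <- v | glabel x != lab v p].

Let lt_p : p < m. Proof. exact: ltn_trans lt_q. Qed.

Lemma wf_deleted : wf_gauss v'.
Proof. exact: (wf_gauss_filter (fun n => n != lab v p)). Qed.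

Let gpartner_q : gpartner v q = p.
Proof. by rewrite -pq gpartnerK // lt_p. Qed.

Let lab_q : lab v q = lab v p.
Proof. by have [_ _] := gpartnerP wf lt_p; rewrite pq. Qed.

(* [skip_pq j] is the position in [v] of passage [j] of [v']. *)
Definition skip_pq j := bump q (bump p j).
Definition unskip_pq z := z - (p < z) - (q < z).

Lemma skip_pq_neq j : skip_pq j != p /\ skip_pq j != q.
Proof. by rewrite /skip_pq /bump; split; apply/eqP; lia. Qed.

Lemma skip_pq_lt j : j < m - 2 -> skip_pq j < m.
Proof. by rewrite /skip_pq /bump; lia. Qed.

Lemma skip_unskip_pq z : z != p -> z != q -> skip_pq (unskip_pq z) = z.
Proof. by rewrite /skip_pq /unskip_pq /bump => /eqP ? /eqP ?; lia. Qed.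

Lemma deleted_crossingE : v' = rem_at p (rem_at q v).
Proof.
have sq : size (rem_at q v) = m.-1 by rewrite size_rem_at.
have hp : p < size (rem_at q v) by rewrite sq; lia.
rewrite /v' -(filter_rem_at (i := q)) //; last by rewrite lab_q eqxx.
rewrite -(filter_rem_at (i := p)) //; last by rewrite nth_rem_at // /bump leqNgt lt_pq eqxx.
apply/all_filterP/(all_nthP gdef) => j hj; rewrite !nth_rem_at //.
have hj' : skip_pq j < m by apply: skip_pq_lt; move: hj; rewrite size_rem_at // sq; lia.
apply/eqP => /(same_label_cases wf lt_p hj'); rewrite pq.
by have [ne_p ne_q] := skip_pq_neq j; case=> /eqP; apply/negP.
Qed.

Lemma size_deleted_crossing : size v' = m - 2.
Proof. by rewrite deleted_crossingE size_rem_at ?size_rem_at; lia. Qed.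

Lemma nth_deleted_crossing j : nth gdef v' j = nth gdef v (skip_pq j).
Proof. by rewrite deleted_crossingE !nth_rem_at // size_rem_at; lia. Qed.

Lemma gpartner_skip_pq j : j < size v' -> gpartner v (skip_pq j) = skip_pq (gpartner v' j).
Proof.
move=> hj; have [lt_j' ne_j' eq_lab] := gpartnerP wf_deleted hj.
move: hj lt_j' ne_j'; rewrite size_deleted_crossing => hj lt_j' ne_j'.
by apply: gpartner_eq; rewrite -?nth_deleted_crossing // /skip_pq /bump; lia.
Qed.

Definition swap_pq j := if j == p then q else if j == q then p else j.

(* Composing the smoothing with the transposition (p q) reconnects the arcs at
   the crossing as if it were absent; this map visits positions [p] and [q]
   only in passing, and [next_kept] is where it next lands on a kept arc. *)
Definition smoothing_swap j := knotoid_smoothing v (swap_pq j).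

Definition next_kept z :=
  if z == p then (if p.+1 == q then q.+1 else p.+1) else if z == q then q.+1 else z.

Lemma next_kept_skip_pq j : j < m - 2 -> next_kept (skip_pq j).+1 = skip_pq j.+1.
Proof. by rewrite /next_kept /skip_pq /bump; repeat case: ifP => ?; lia. Qed.

Lemma next_kept0 : next_kept 0 = skip_pq 0.
Proof. by rewrite /next_kept /skip_pq /bump; repeat case: ifP => ?; lia. Qed.

Lemma swap_pq_lt j : j < m.+1 -> swap_pq j < m.+1.
Proof. by rewrite /swap_pq; repeat case: ifP => ?; lia. Qed.

Lemma smoothing_swap_lt j : j < m.+1 -> smoothing_swap j < m.+1.
Proof. by move/swap_pq_lt; apply: knotoid_smoothing_lt. Qed.

Lemma smoothing_swap_ord_inj : injective (ordf m.+1 smoothing_swap).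
Proof.
apply: ordf_inj smoothing_swap_lt _ => i j /swap_pq_lt hi /swap_pq_lt hj.
move/(knotoid_smoothing_inj wf hi hj); rewrite /swap_pq.
by repeat case: ifP => ?; lia.
Qed.

Lemma smoothing_swap_other j : j != p -> j != q -> smoothing_swap j = knotoid_smoothing v j.
Proof. by move=> /negbTE jp /negbTE jq; rewrite /smoothing_swap /swap_pq jp jq. Qed.

Lemma iter_smoothing_swap z : exists k, iter k smoothing_swap z = next_kept z.
Proof.
have swap_p : smoothing_swap p = p.+1.
  by rewrite /smoothing_swap /swap_pq eqxx /knotoid_smoothing lt_q gpartner_q.
have swap_q : smoothing_swap q = q.+1.
  by rewrite /smoothing_swap /swap_pq ifN_eq ?eqxx; [rewrite /knotoid_smoothing lt_p pq | lia].
rewrite /next_kept; case: eqP => [->|_]; last case: eqP => [->|_].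
- by case: eqP => [eq_q|_]; [exists 2; rewrite /= swap_p eq_q | exists 1].
- by exists 1.
- by exists 0.
Qed.

Definition lift_kept (x : 'I_(size v').+1) : 'I_m.+1 := insubd ord0 (skip_pq x).

Lemma lift_kept_val x : val (lift_kept x) = skip_pq x.
Proof.
have lt_skip : skip_pq x < m.+1.
  by case: x => n /=; rewrite size_deleted_crossing /skip_pq /bump; lia.
by rewrite /lift_kept val_insubd lt_skip.
Qed.

Lemma smoothing_swap_sim x : fconnect (ordf m.+1 smoothing_swap)
  (lift_kept x) (lift_kept (ordf (size v').+1 (knotoid_smoothing v') x)).
Proof.
have sz := size_deleted_crossing.
have valT' := ordf_val (knotoid_smoothing_lt wf_deleted).
apply: connect_trans (fconnect1 _ _) _.
case: (ltnP x (size v')) => hx.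
  have [k iter_k] := iter_smoothing_swap (skip_pq (gpartner v' x)).+1.
  apply: (ordf_connect smoothing_swap_lt (k := k)).
  rewrite (ordf_val smoothing_swap_lt) !lift_kept_val valT'.
  have [ne_p ne_q] := skip_pq_neq x; have [lt_x' _ _] := gpartnerP wf_deleted hx.
  have lt_sx : skip_pq x < m by apply: skip_pq_lt; rewrite -sz.
  rewrite smoothing_swap_other // /knotoid_smoothing lt_sx hx gpartner_skip_pq // iter_k.
  by apply: next_kept_skip_pq; rewrite -sz.
have [k iter_k] := iter_smoothing_swap 0.
apply: (ordf_connect smoothing_swap_lt (k := k)).
rewrite (ordf_val smoothing_swap_lt) !lift_kept_val valT'.
have -> : nat_of_ord x = size v' by have := ltn_ord x; lia.
have skip_end : skip_pq (size v') = m by rewrite sz /skip_pq /bump; lia.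
rewrite skip_end smoothing_swap_other; try by apply/eqP; lia.
by rewrite /knotoid_smoothing !ltnn iter_k next_kept0.
Qed.

Lemma smoothing_swap_onto y : exists x, fconnect (ordf m.+1 smoothing_swap) y (lift_kept x).
Proof.
have [k iter_k] := iter_smoothing_swap y.
have [lt_n ne_p ne_q] : [/\ next_kept y < m.+1, next_kept y != p & next_kept y != q].
  by have := ltn_ord y; rewrite /next_kept; split; try apply/eqP; repeat case: ifP => ?; lia.
have lt_u : unskip_pq (next_kept y) < (size v').+1.
  by move: lt_n ne_p ne_q size_deleted_crossing; rewrite /unskip_pq => ? /eqP ? /eqP ? ->; lia.
exists (Ordinal lt_u); apply: (ordf_connect smoothing_swap_lt (k := k)).
by rewrite lift_kept_val skip_unskip_pq.
Qed.

Let ord_p : 'I_m.+1 := Ordinal (leqW lt_p).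
Let ord_q : 'I_m.+1 := Ordinal (leqW lt_q).

Lemma ordf_smoothing_tperm z :
  ordf m.+1 (knotoid_smoothing v) (tperm ord_p ord_q z) = ordf m.+1 smoothing_swap z.
Proof.
apply: val_inj; rewrite (ordf_val smoothing_swap_lt) (ordf_val (knotoid_smoothing_lt wf)).
rewrite /smoothing_swap /swap_pq; congr knotoid_smoothing.
case: tpermP => [->|->|ne_p ne_q] /=; first by rewrite eqxx.
  by rewrite ifN_eq ?eqxx //; lia.
have zp : val z != p by apply/eqP => e; apply: ne_p; exact: val_inj.
have zq : val z != q by apply/eqP => e; apply: ne_q; exact: val_inj.
by rewrite !ifN_eq.
Qed.

Lemma knotoid_cycles_delete_crossing : knotoid_cycles v <= knotoid_cycles v' + 1.
Proof.
rewrite /knotoid_cycles !ncyclesE.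
apply: leq_trans (fcard_comp_tperm ord_p ord_q (knotoid_smoothing_ord_inj wf)) _.
rewrite leq_add2r (eq_fcard ordf_smoothing_tperm).
exact: (leq_fcard_sim smoothing_swap_sim smoothing_swap_ord_inj
         (knotoid_smoothing_ord_inj wf_deleted) smoothing_swap_onto).
Qed.

End DeleteCrossing.

Lemma ncross_filter_label v l : l \in map glabel v ->
  ncross [seq x <- v | glabel x != l] = (ncross v).-1.
Proof.
move=> lv; rewrite /ncross.
have -> : map glabel [seq x <- v | glabel x != l] = [seq y <- map glabel v | y != l].
  by rewrite filter_map.
rewrite -filter_undup.
by rewrite -(rem_filter l (undup_uniq _)) size_rem // mem_undup.
Qed.

Lemma knotoid_delete_crossing v l : wf_gauss v ->
  ncross [seq x <- v | glabel x != l] + knotoid_cycles v <=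
  ncross v + knotoid_cycles [seq x <- v | glabel x != l].
Proof.
move=> wf; have [lv|lv] := boolP (l \in map glabel v); last first.
  suff /all_filterP -> : all (fun x => glabel x != l) v by [].
  by apply/allP => x xv; apply: contraNneq lv => <-; apply: map_f.
have ncross_gt0 : 0 < ncross v.
  by rewrite /ncross -has_predT has_undup has_predT; case: (map _ v) lv.
rewrite ncross_filter_label //; case/mapP: lv => x /(nthP gdef) [p hp px] ->.
have -> : glabel x = lab v p by rewrite px.
have [lt_p' ne_p' lab_p'] := gpartnerP wf hp.
case: (ltngtP p (gpartner v p)) => [lt|gt|eq].
- by have := knotoid_cycles_delete_crossing wf lt lt_p' erefl; lia.
- have := knotoid_cycles_delete_crossing wf gt hp (gpartnerK wf hp).
  by rewrite lab_p'; lia.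
- by move: ne_p'; rewrite -eq eqxx.
Qed.

Lemma knotoid_delete_crossings v (L : seq nat) : wf_gauss v ->
  ncross [seq x <- v | glabel x \notin L] + knotoid_cycles v <=
  ncross v + knotoid_cycles [seq x <- v | glabel x \notin L].
Proof.
move=> wf; elim: L => [|l L IH]; first by rewrite (@eq_filter _ _ predT) ?filter_predT.
have -> : [seq x <- v | glabel x \notin l :: L] =
          [seq x <- [seq x <- v | glabel x \notin L] | glabel x != l].
  by rewrite -filter_predI; apply: eq_filter => x /=; rewrite in_cons negb_or.
have := knotoid_delete_crossing l (wf_gauss_filter (fun n => n \notin L) wf); lia.
Qed.

Lemma modn_lt_double a m : a < m.*2 -> (a < m /\ a %% m = a) \/ (m <= a /\ a %% m = a - m).
Proof.
move=> ha; case: (ltnP a m) => h; [left; rewrite modn_small | right] => //.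
by rewrite -{1}(subnK h) modnDr modn_small //; lia.
Qed.

(* Splits every innermost [a %% m] with [a < 2 m] (checked by [lia]) into its two cases. *)
Ltac case_modn := repeat match goal with
 | |- context [?a %% ?m] =>
   lazymatch a with context [_ %% _] => fail | _ =>
     let H := fresh "H" in let E := fresh "E" in
     have [[H E]|[H E]] := @modn_lt_double a m ltac:(lia); rewrite E; clear E end
 end.

Lemma nth_rot_mod (s : gauss_code) r j : r < size s -> j < size s ->
  nth gdef (rot r s) j = nth gdef s ((j + r) %% size s).
Proof.
move=> hr hj; rewrite /rot nth_cat size_drop; case: ltnP => c.
  by rewrite nth_drop modn_small; [congr nth; lia | lia].
by rewrite nth_take; [congr nth; case_modn; lia | lia].
Qed.

Definition knot_smoothing (w : gauss_code) i := gpartner w (i.+1 %% size w).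

Lemma seifert_circles_knotE w : 0 < size w ->
  seifert_circles_knot w = ncycles (size w) (knot_smoothing w).
Proof. by move=> w_gt0; rewrite /seifert_circles_knot ifN // -lt0n. Qed.

Section KnotSmoothing.
Variable w : gauss_code.
Hypothesis wf : wf_gauss w.
Local Notation m := (size w).

Lemma knot_smoothing_lt i : i < m -> knot_smoothing w i < m.
Proof. by move=> lt_i; have [] := gpartnerP wf (@ltn_pmod i.+1 m (leq_ltn_trans _ lt_i)). Qed.

Lemma knot_smoothing_ord_inj : injective (ordf m (knot_smoothing w)).
Proof.
apply: ordf_inj knot_smoothing_lt _ => i j; rewrite !unfold_in /= => hi hj.
have m_gt0 : 0 < m by lia.
rewrite /knot_smoothing => /(congr1 (gpartner w)); rewrite !gpartnerK ?ltn_pmod //.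
by case_modn; lia.
Qed.

End KnotSmoothing.

Section CutKnot.
Variables (w : gauss_code) (r : nat).
Local Notation m := (size w).
Hypotheses (wf : wf_gauss w) (lt_r : r < m).
Let u := rot r w.

Lemma wf_rot : wf_gauss u.
Proof.
have pe : perm_eq u w by rewrite perm_rot.
rewrite /wf_gauss (perm_all _ pe); apply: sub_all wf => x /=.
by rewrite !(seq.permP pe) (perm_all _ pe).
Qed.

Lemma ncross_rot : ncross u = ncross w.
Proof.
by rewrite /ncross /u map_rot; apply/perm_size/perm_undup/perm_mem; rewrite perm_rot.
Qed.

Lemma gpartner_rot x : x < m -> gpartner w ((x + r) %% m) = (gpartner u x + r) %% m.
Proof.
move=> hx; have hx' : x < size u by rewrite size_rot.
have [lt_x' ne_x' lab_x'] := gpartnerP wf_rot hx'; rewrite size_rot in lt_x'.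
apply: gpartner_eq => //; try by rewrite ltn_pmod //; lia.
  by apply: contra_neq ne_x'; case_modn; lia.
by rewrite -!nth_rot_mod.
Qed.

Let r' := (r + m - 1) %% m.

Let lt_r' : r' < m.
Proof. by rewrite ltn_pmod //; apply: leq_ltn_trans lt_r. Qed.

(* Arc [x] of the cut diagram runs into passage [(x + r) %% m] of [w], so it
   is the knot arc [(x + r - 1) %% m]; the head arc [m] and arc [0] are the
   two halves of the knot arc that was cut. *)
Definition cut_arc (x : 'I_m.+1) : 'I_m := insubd (Ordinal lt_r) ((x + r') %% m).

Lemma cut_arc_val x : val (cut_arc x) = (x + r') %% m.
Proof. by rewrite /cut_arc val_insubd ltn_pmod //; apply: leq_ltn_trans lt_r. Qed.

Lemma cut_arc_sim x : fconnect (ordf m (knot_smoothing w))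
  (cut_arc x) (cut_arc (ordf m.+1 (knotoid_smoothing u) x)).
Proof.
have lt_r'm := lt_r'.
have valT := ordf_val (knotoid_smoothing_lt wf_rot); rewrite size_rot in valT.
have ord_lt := knot_smoothing_lt wf.
case: (ltnP x m) => hx.
  apply: (ordf_connect ord_lt (k := 1)) => /=; rewrite !cut_arc_val valT.
  have hxu : x < size u by rewrite size_rot.
  have [lt_x' _ _] := gpartnerP wf_rot hxu; rewrite size_rot in lt_x'.
  rewrite /knotoid_smoothing size_rot hx /knot_smoothing.
  have -> : ((x + r') %% m).+1 %% m = (x + r) %% m by rewrite /r'; case_modn; lia.
  by rewrite gpartner_rot // /r'; case_modn; lia.
have x_m : nat_of_ord x = m by have := ltn_ord x; lia.
apply: (ordf_connect ord_lt (k := 0)) => /=; rewrite !cut_arc_val valT.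
by rewrite /knotoid_smoothing size_rot x_m ltnn /r'; case_modn; lia.
Qed.

Lemma cut_arc_onto y : exists x, fconnect (ordf m (knot_smoothing w)) y (cut_arc x).
Proof.
have lt_x : (y + (m - r')) %% m < m.+1 by rewrite ltnS ltnW // ltn_pmod //; lia.
exists (Ordinal lt_x); apply: (ordf_connect (knot_smoothing_lt wf) (k := 0)) => /=.
by rewrite cut_arc_val /=; have := ltn_ord y; rewrite /r' => lt_y; case_modn; lia.
Qed.

Lemma seifert_circles_knot_le_cut : seifert_circles_knot w <= knotoid_cycles u.
Proof.
rewrite seifert_circles_knotE; last by apply: leq_ltn_trans lt_r.
rewrite /knotoid_cycles !ncyclesE size_rot.
apply: (leq_fcard_sim cut_arc_sim (knot_smoothing_ord_inj wf) _ cut_arc_onto).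
by have := knotoid_smoothing_ord_inj wf_rot; rewrite size_rot.
Qed.

End CutKnot.

Section Bridge.
Variables (w : gauss_code) (b k : nat).
Hypotheses (wf : wf_gauss w) (bridge : is_over_bridge w b k || is_under_bridge w b k).
Local Notation m := (size w).

Lemma bridge_start_lt : b < m.
Proof. by case/orP: bridge => /and3P[]. Qed.

Lemma gover_bridge j : j < k -> ovr w (bridge_pos w b j) = ovr w b.
Proof.
have pos0 : bridge_pos w b 0 = b by rewrite /bridge_pos addn0 modn_small // bridge_start_lt.
case/orP: bridge => /and3P[k_gt0 _ /allP all_ovr] hj;
  move: (all_ovr j) (all_ovr 0); rewrite !mem_iota hj k_gt0 pos0 => /(_ isT) ovr_j /(_ isT) ovr_b.
- by rewrite ovr_j ovr_b.
- by rewrite (negbTE ovr_j) (negbTE ovr_b).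
Qed.

(* The partner of the first passage of a bridge is not on the bridge. *)
Lemma bridge_length_le : k <= m.
Proof.
rewrite leqNgt; apply/negP => lt_mk.
have lt_b := bridge_start_lt.
have [lt_p' ne_p' lab_p'] := gpartnerP wf lt_b.
pose j := (gpartner w b + m - b) %% m.
have lt_jk : j < k by apply: leq_trans (ltn_pmod _ _) (ltnW lt_mk); lia.
have pos_j : bridge_pos w b j = gpartner w b by rewrite /bridge_pos /j; case_modn; lia.
move: ne_p'; rewrite (wf_nth_inj wf lt_p' lt_b lab_p') ?eqxx //.
by rewrite -pos_j gover_bridge.
Qed.

Lemma remove_bridgeE :
  remove_bridge w b k = [seq x <- rot ((b + k) %% m) w | glabel x \notin bridge_labels w b k].
Proof.
have lt_b := bridge_start_lt; have le_k := bridge_length_le.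
have -> : rot ((b + k) %% m) w = [seq nth gdef w (bridge_pos w (b + k) j) | j <- iota 0 m].
  apply: (@eq_from_nth _ gdef); first by rewrite size_rot size_map size_iota.
  move=> j; rewrite size_rot => hj.
  rewrite (nth_map 0) ?size_iota // nth_iota // add0n nth_rot_mod ?ltn_pmod //; last by lia.
  by rewrite /bridge_pos modnDmr addnC.
have -> : iota 0 m = iota 0 (m - k) ++ iota (m - k) k by rewrite -iotaD subnK.
rewrite map_cat filter_cat /remove_bridge -[LHS]cats0; congr cat; apply/esym.
apply/eqP; rewrite -size_eq0 size_filter eqn0Ngt -has_count; apply/hasPn => x.
case/mapP => j; rewrite mem_iota => /andP[le_j lt_j] -> /=.
apply/negPn/mapP; exists (j - (m - k)); first by rewrite mem_iota; lia.
rewrite /bridge_pos (_ : b + k + j = b + (j - (m - k)) + m) ?modnDr //; lia.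
Qed.

End Bridge.

Lemma remove_bridge_cycles w b k : wf_gauss w ->
  is_over_bridge w b k || is_under_bridge w b k ->
  ncross (remove_bridge w b k) + seifert_circles_knot w <=
  ncross w + knotoid_cycles (remove_bridge w b k).
Proof.
move=> wf bridge; rewrite remove_bridgeE //.
set r := (b + k) %% size w.
have lt_r : r < size w by rewrite ltn_pmod // (leq_ltn_trans _ (bridge_start_lt bridge)).
have := seifert_circles_knot_le_cut wf lt_r.
have := knotoid_delete_crossings (bridge_labels w b k) (wf_rot r wf).
by rewrite ncross_rot //; lia.
Qed.

Import Order.TTheory GRing.Theory Num.Theory.
Local Open Scope ring_scope.

Theorem mainTheorem4 (w : gauss_code) (b k : nat) :
  knot_diagram w ->
  is_over_bridge w b k || is_under_bridge w b k ->
  knotoid_genus (remove_bridge w b k) <= knot_genus w.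
Proof.
move=> /andP[wf _] bridge.
have le_cycles := remove_bridge_cycles wf bridge.
have cycles_gt0 : (0 < knotoid_cycles (remove_bridge w b k))%N.
  apply: knotoid_cycles_gt0; rewrite remove_bridgeE //.
  exact: (wf_gauss_filter (fun n => n \notin bridge_labels w b k) (wf_rot _ wf)).
rewrite /knotoid_genus /knot_genus -[seifert_circles_knotoid _]/(knotoid_cycles _ - 1)%N.
move: le_cycles cycles_gt0; set n' := ncross _; set s := seifert_circles_knot w.
set n := ncross w; set c := knotoid_cycles _ => le_cycles cycles_gt0.
rewrite natrB // ler_pM2r ?invr_gt0 ?ltr0n //.
have : (n' + s)%:R <= (n + c)%:R :> rat by rewrite ler_nat.
by rewrite !natrD; lra.
Qed.
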